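(* Let $\Pi$ be a problem with input in the black-white formalism. Suppose all node degrees are at most $\Delta$ and $\Pi$ has at most $L$ output labels. Suppose $\Pi$ cannot be solved in $0$ rounds by a deterministic white algorithm in the PN model, even if a solution of a problem $\Pi_{\mathrm{in}}$ is given as input. Then every randomized $0$-round white algorithm for $\Pi$, given a solution of $\Pi_{\mathrm{in}}$ as input, fails with probability at least $1/L^{\Delta^2}$.
   Context: A problem with input in the black-white formalism is $(\Sigma_{\mathrm{in}},\Sigma_{\mathrm{out}},\mathcal{N}=(\mathcal{N}^1,\dots,\mathcal{N}^\Delta),\mathcal{E}=(\mathcal{E}^1,\dots,\mathcal{E}^\delta),g)$. Here: - $\mathcal{N}^i$ and $\mathcal{E}^i$ are sets of cardinality-$i$ multisets of output labels, giving the allowed label multisets around white, resp. black, nodes of degree $i$; - $g:\Sigma_{\mathrm{in}}\to2^{\Sigma_{\mathrm{out}}}$ restricts the output on an edge given its input label. Instances are $2$-colored bipartite graphs with input labels on edges. ''Given a solution of $\Pi_{\mathrm{in}}$'' (where $\Pi_{\mathrm{in}}$ is a problem without inputs whose outputs are in $\Sigma_{\mathrm{in}}$) means the input labels form a valid solution of $\Pi_{\mathrm{in}}$. A $0$-round white algorithm in the PN model lets each white node choose output labels on its incident edges knowing only its degree, its port numbering and its incident input labels; in the randomized case it may also use private random bits. Failing means some constraint is violated, in particular at some black node, on some instance. *)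

From mathcomp Require Import all_boot all_order all_algebra.
Set Implicit Arguments.
Unset Strict Implicit.
Unset Printing Implicit Defensive.
Import Order.TTheory GRing.Theory Num.Theory.

(* A multiset over a finite label set, represented by its multiplicity
   function; its cardinality is the sum of the multiplicities. *)
Definition mset (T : finType) := {ffun T -> nat}.

(* A problem without inputs in the black-white formalism over labels Sig:
   [white_c] (resp. [black_c]) is the union of the sets N^i (resp. E^i),
   i.e. the allowed multisets of labels around a white (resp. black) node,
   the degree of the node being the cardinality of the multiset. *)
Record bw_problem (Sig : finType) := BWProblem {
  white_c : pred (mset Sig);
  black_c : pred (mset Sig) }.

Record problem_in (Sin Sout : finType) := ProblemIn {
  out_pb : bw_problem Sout;
  gmap : Sin -> {set Sout} }.

(* A finite 2-coloured bipartite graph given by its edges, each with a white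
   and a black endpoint, together with a port numbering of white nodes:
   [ports v] lists the edges incident to v, the port of edge e at v being
   its index in [ports v]. *)
Record pn_graph := PNGraph {
  White : finType;
  Black : finType;
  Edge : finType;
  wend : Edge -> White;
  bend : Edge -> Black;
  ports : White -> seq Edge }.

Section Defs.
Variable G : pn_graph.

Definition wdeg (v : White G) := #|[set e | wend e == v]|.
Definition bdeg (u : Black G) := #|[set e | bend e == u]|.

Definition well_formed (Delta : nat) : Prop :=
  injective (fun e : Edge G => (wend e, bend e)) /\
  (forall v : White G, uniq (ports v) /\ forall e : Edge G, (e \in ports v) = (wend e == v)) /\
  (forall v, 0 < wdeg v <= Delta) /\
  (forall u, 0 < bdeg u <= Delta).

Definition wmset (T : finType) (lab : Edge G -> T) (v : White G) : mset T :=
  [ffun x => #|[set e | (wend e == v) && (lab e == x)]|].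
Definition bmset (T : finType) (lab : Edge G -> T) (u : Black G) : mset T :=
  [ffun x => #|[set e | (bend e == u) && (lab e == x)]|].

Definition bw_valid (T : finType) (P : bw_problem T) (lab : Edge G -> T) : bool :=
  [forall v, white_c P (wmset lab v)] && [forall u, black_c P (bmset lab u)].

Definition valid_out (Sin Sout : finType) (Pi : problem_in Sin Sout)
    (inp : Edge G -> Sin) (out : Edge G -> Sout) : bool :=
  [forall e, out e \in gmap Pi (inp e)] && bw_valid (out_pb Pi) out.

Definition input_tuple (Sin : finType) (inp : Edge G -> Sin) (v : White G) :=
  map_tuple inp (in_tuple (ports v)).

End Defs.

(* Deterministic 0-round white algorithm in PN: a white node of degree d
   maps its incident input labels (in port order) to its outputs (in port order). *)
Definition det_alg (Sin Sout : finType) := forall d, d.-tuple Sin -> d.-tuple Sout.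

Definition det_output (G : pn_graph) (Sin Sout : finType) (A : det_alg Sin Sout)
    (inp : Edge G -> Sin) (out : Edge G -> Sout) : Prop :=
  forall v : White G, map_tuple out (in_tuple (ports v)) = A _ (input_tuple inp v).

Definition det_solves (Sin Sout : finType) (Delta : nat) (Pi : problem_in Sin Sout)
    (Piin : bw_problem Sin) (A : det_alg Sin Sout) : Prop :=
  forall (G : pn_graph) (inp : Edge G -> Sin), well_formed G Delta ->
    bw_valid Piin inp ->
    forall out : Edge G -> Sout, det_output A inp out -> valid_out Pi inp out.

(* Randomized 0-round white algorithm: a white node of degree d with incident
   inputs s draws its tuple of outputs from the distribution mu d s, using
   private randomness (independently of all other nodes). *)
Definition rand_alg (R : realFieldType) (Sin Sout : finType) :=
  forall d, d.-tuple Sin -> {ffun d.-tuple Sout -> R}.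

Definition is_rand_alg (R : realFieldType) (Sin Sout : finType) (mu : rand_alg R Sin Sout) :=
  forall d (s : d.-tuple Sin),
    ((forall t, 0 <= mu d s t) /\ \sum_t mu d s t = 1)%R.

Definition fail_prob (R : realFieldType) (Sin Sout : finType) (Pi : problem_in Sin Sout)
    (mu : rand_alg R Sin Sout) (G : pn_graph) (inp : Edge G -> Sin) : R :=
  (\sum_(out : {ffun Edge G -> Sout} | ~~ valid_out Pi inp out)
     \prod_(v : White G) mu _ (input_tuple inp v) (map_tuple out (in_tuple (ports v))))%R.

From mathcomp Require Import all_boot all_order all_algebra.
From Stdlib Require Import Classical_Prop.
Import Order.TTheory GRing.Theory Num.Theory.

Set Implicit Arguments.
Unset Strict Implicit.
Unset Printing Implicit Defensive.

(** Let [A] be the deterministic algorithm that outputs, at every white node,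
    a most likely output tuple of the randomized algorithm [mu]; at a node of
    degree [d <= Delta] that tuple has probability at least [1 / L ^ Delta].
    By assumption [A] fails on some instance, and the violated constraint (at
    an edge, a white node or a black node) only involves the outputs of at
    most [Delta] white nodes.  Since white nodes draw their outputs
    independently, with probability at least [(1 / L ^ Delta) ^ Delta] these
    nodes all output what [A] outputs, and then the same constraint is
    violated. *)

Local Open Scope ring_scope.

Lemma map_nth_index (T U : eqType) (s : seq T) (t : seq U) (d : T -> U) :
  uniq s -> size t = size s -> map (fun e => nth (d e) t (index e s)) s = t.
Proof.
case: s => [|x0 s] s_uniq t_size; first by case: t t_size.
apply: (@eq_from_nth _ (d x0)); first by rewrite size_map t_size.
move=> k; rewrite size_map => k_lt.
by rewrite (nth_map x0) // index_uniq //; apply: set_nth_default; rewrite t_size.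
Qed.

Section Fiberwise.
Variables (I E S : finType) (w : E -> I) (f0 : E -> S).

Definition agrees_off (i : I) (g : {ffun E -> S}) :=
  [forall e, (w e != i) ==> (g e == f0 e)].
Definition agrees_at (i : I) (g : {ffun E -> S}) :=
  [forall e, (w e == i) ==> (g e == f0 e)].
Definition agrees_on (W : {set I}) (g : {ffun E -> S}) :=
  [forall e, (w e \in W) ==> (g e == f0 e)].

Section Products.
Variable R : comPzSemiRingType.

Definition fiber_local (F : I -> {ffun E -> S} -> R) :=
  forall i (f g : {ffun E -> S}), (forall e, w e = i -> f e = g e) -> F i f = F i g.

(* A function on [E] is the same as a family, indexed by [I], of functions
   that agree with [f0] off the fibres of [w]. *)
Lemma sum_prod_fiberwise F : fiber_local F ->
  \sum_f \prod_i F i f = \prod_i \sum_(g | agrees_off i g) F i g.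
Proof.
move=> F_local; rewrite bigA_distr_big_dep.
pose glue (phi : {ffun I -> {ffun E -> S}}) := [ffun e => phi (w e) e].
pose cut (f : {ffun E -> S}) := [ffun i => [ffun e => if w e == i then f e else f0 e]].
rewrite (reindex cut) /=; last first.
  exists glue => [f _|phi /familyP phi_off].
    by apply/ffunP => e; rewrite !ffunE eqxx.
  apply/ffunP => i; apply/ffunP => e; rewrite !ffunE; case: eqP => [<- //|/eqP w_e].
  by have /forallP /(_ e) := phi_off i; rewrite w_e => /eqP.
apply: eq_big => [f|f _].
  apply/esym/familyP => i; rewrite ffunE; apply/forallP => e; rewrite ffunE.
  by apply/implyP => /negPf ->.
by apply: eq_bigr => i _; rewrite ffunE; apply: F_local => e <-; rewrite ffunE eqxx.
Qed.

Lemma sum_agrees_on_prod F (W : {set I}) : fiber_local F ->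
  \sum_(f | agrees_on W f) \prod_i F i f =
  \prod_(i in W) F i (finfun f0) * \prod_(i in ~: W) \sum_(g | agrees_off i g) F i g.
Proof.
move=> F_local; pose Fc i f := if (i \in W) && ~~ agrees_at i f then 0 else F i f.
have Fc_local : fiber_local Fc.
  move=> i f g fg; rewrite /Fc (@F_local i f g fg); congr (if _ && ~~ _ then _ else _).
  by apply: eq_forallb => e; case: eqP => //= /fg ->.
transitivity (\sum_f \prod_i Fc i f).
  rewrite big_mkcond; apply: eq_bigr => f _.
  case: ifPn => [/forallP f_on|/forallPn [e]].
    apply: eq_bigr => i _; rewrite /Fc; case: ifP => // /andP [iW /negP []].
    by apply/forallP => e; apply/implyP => /eqP w_e; move: (f_on e); rewrite w_e iW.
  rewrite negb_imply => /andP [eW f_e].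
  rewrite (bigD1 (w e)) //= /Fc eW /=; case: (boolP (agrees_at _ _)) => [/forallP|].
    by move/(_ e); rewrite eqxx (negPf f_e).
  by rewrite mul0r.
rewrite (sum_prod_fiberwise Fc_local) (bigID (mem W)) /=; congr (_ * _).
  apply: eq_bigr => i iW.
  rewrite (eq_bigr (fun g => if agrees_at i g then F i g else 0)); last first.
    by move=> g _; rewrite /Fc iW; case: agrees_at.
  rewrite -big_mkcondr; apply: big_pred1 => g.
  apply/andP/eqP => [[/forallP g_off /forallP g_at]|->].
    apply/ffunP => e; rewrite ffunE; apply/eqP.
    by case: (boolP (w e == i)) => w_e; [move/implyP: (g_at e)|move/implyP: (g_off e)]; apply.
  by split; apply/forallP => e; rewrite ffunE eqxx implybT.
apply: eq_big => [i|i iW]; first by rewrite inE.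
by apply: eq_bigr => g _; rewrite /Fc (negPf iW).
Qed.

End Products.

Lemma sum_agrees_off_tuple (R : nmodType) (i : I) (s : seq E)
    (F : (size s).-tuple S -> R) :
  uniq s -> (forall e, (e \in s) = (w e == i)) ->
  \sum_(g | agrees_off i g) F (map_tuple g (in_tuple s)) = \sum_t F t.
Proof.
move=> s_uniq s_fiber.
pose psi (t : (size s).-tuple S) :=
  [ffun e => if w e == i then nth (f0 e) t (index e s) else f0 e].
have psiK t : map_tuple (psi t) (in_tuple s) = t.
  apply: val_inj; rewrite /= -[RHS](map_nth_index f0 s_uniq (size_tuple t)).
  by apply/eq_in_map => e; rewrite s_fiber ffunE => ->.
rewrite (reindex psi) /=; last first.
  exists (fun g => map_tuple g (in_tuple s)) => [t _|g /forallP g_off]; first exact: psiK.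
  apply/ffunP => e; rewrite ffunE; case: ifPn => [w_e|/(implyP (g_off e)) /eqP //].
  by rewrite -s_fiber in w_e; rewrite /= (nth_map e) ?index_mem // nth_index.
apply: eq_big => [t|t _]; last by rewrite psiK.
by apply/forallP => e; rewrite ffunE; apply/implyP => /negPf ->.
Qed.

End Fiberwise.

Section Distributions.
Variables (T : finType).

Lemma card_gt0_of_sum_eq1 (R : nzSemiRingType) (p : T -> R) :
  \sum_t p t = 1 -> (0 < #|T|)%N.
Proof.
move=> p1; apply/card_gt0P; case: (pickP (@predT T)) => [t _|T0]; first by exists t.
by move: p1; rewrite big_pred0 // => /eqP; rewrite eq_sym oner_eq0.
Qed.

Lemma exists_argmax (R : realDomainType) (p : T -> R) :
  (0 < #|T|)%N -> exists t, [forall t', p t' <= p t].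
Proof.
case/card_gt0P => t0 _; case: (arg_maxP p (erefl : predT t0)) => t _ t_max.
by exists t; apply/forallP => t'; exact: t_max.
Qed.

Lemma inv_natr_le1 (R : numFieldType) (n : nat) : (n%:R : R)^-1 <= 1.
Proof. by case: n => [|n]; rewrite ?invr0 ?ler01 // invf_le1 ?ltr0Sn // ler1n. Qed.

Lemma argmax_mass_ge (R : numDomainType) (p : T -> R) (t : T) :
  (forall t', p t' <= p t) -> \sum_t' p t' = 1 -> 1 <= #|T|%:R * p t.
Proof.
move=> t_max p1; rewrite -[X in X <= _]p1 mulr_natl -sumr_const.
by apply: ler_sum => t' _.
Qed.

End Distributions.

Section Graphs.
Variables (G : pn_graph) (Delta : nat).
Hypothesis wf : well_formed G Delta.

Lemma size_ports (v : White G) : size (ports v) = wdeg v.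
Proof.
have [_ [ports_ok _]] := wf; have [ports_uniq ports_mem] := ports_ok v.
by rewrite /wdeg -(card_uniqP ports_uniq); apply: eq_card => e; rewrite inE ports_mem.
Qed.

Lemma wmset_local (T : finType) (lab lab' : Edge G -> T) (v : White G) :
  (forall e, wend e = v -> lab e = lab' e) -> wmset lab v = wmset lab' v.
Proof.
move=> eq_lab; apply/ffunP => x; rewrite !ffunE; apply: eq_card => e.
by rewrite !inE; case: eqP => //= /eq_lab ->.
Qed.

Lemma bmset_local (T : finType) (lab lab' : Edge G -> T) (u : Black G) :
  (forall e, bend e = u -> lab e = lab' e) -> bmset lab u = bmset lab' u.
Proof.
move=> eq_lab; apply/ffunP => x; rewrite !ffunE; apply: eq_card => e.
by rewrite !inE; case: eqP => //= /eq_lab ->.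
Qed.

Lemma invalid_out_local (Sin Sout : finType) (Pi : problem_in Sin Sout)
    (inp : Edge G -> Sin) (out : Edge G -> Sout) :
  ~~ valid_out Pi inp out ->
  exists2 W : {set White G}, (#|W| <= Delta)%N &
    forall out' : Edge G -> Sout,
      (forall e, wend e \in W -> out' e = out e) -> ~~ valid_out Pi inp out'.
Proof.
have [_ [_ [wdeg_ok bdeg_ok]]] := wf.
have card1_le (v : White G) : (#|[set v]| <= Delta)%N.
  by rewrite cards1; case/andP: (wdeg_ok v); apply: leq_trans.
rewrite /valid_out /bw_valid negb_and => /orP [/forallPn [e out_e]|].
  exists [set wend e] => // out' agree; apply: contra out_e.
  by case/andP => /forallP /(_ e); rewrite agree ?inE.
rewrite negb_and => /orP [/forallPn [v out_v]|/forallPn [u out_u]].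
  exists [set v] => // out' agree; apply: contra out_v.
  case/and3P => _ /forallP /(_ v) + _; rewrite (wmset_local (lab' := out)) //.
  by move=> e e_v; rewrite agree // inE e_v.
exists (@wend G @: [set e | bend e == u]) => [|out' agree].
  by apply: leq_trans (leq_imset_card _ _) _; case/andP: (bdeg_ok u).
apply: contra out_u => /and3P [_ _ /forallP /(_ u)].
rewrite (bmset_local (lab' := out)) // => e e_u.
by rewrite agree //; apply/imsetP; exists e; rewrite ?inE ?e_u.
Qed.

Lemma fail_prob_ge_cylinder (R : realFieldType) (Sin Sout : finType)
    (Pi : problem_in Sin Sout) (mu : rand_alg R Sin Sout) (inp : Edge G -> Sin)
    (out : Edge G -> Sout) (W : {set White G}) :
  is_rand_alg mu ->
  (forall out' : {ffun Edge G -> Sout},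
     (forall e, wend e \in W -> out' e = out e) -> ~~ valid_out Pi inp out') ->
  \prod_(v in W) mu _ (input_tuple inp v) (map_tuple out (in_tuple (ports v)))
    <= fail_prob Pi mu inp.
Proof.
move=> mu_dist W_bad; have [_ [ports_ok _]] := wf.
pose p v (f : {ffun Edge G -> Sout}) :=
  mu _ (input_tuple inp v) (map_tuple f (in_tuple (ports v))).
have p_local : fiber_local (@wend G) p.
  move=> v f g fg; congr (mu _ _ _); apply: val_inj => /=.
  by apply/eq_in_map => e; rewrite (ports_ok v).2 => /eqP; apply: fg.
have mass1 v : \sum_(g | agrees_off (@wend G) out v g) p v g = 1.
  have [ports_uniq ports_mem] := ports_ok v.
  rewrite /p (sum_agrees_off_tuple _ _ ports_uniq ports_mem).
  exact: (mu_dist _ (input_tuple inp v)).2.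
rewrite /fail_prob (bigID (agrees_on (@wend G) out W)) /=.
apply: ler_wpDr.
  by apply: sumr_ge0 => f _; apply: prodr_ge0 => v _; exact: (mu_dist _ _).1.
rewrite (eq_bigl (agrees_on (@wend G) out W)) => [|f]; last first.
  apply/andb_idl => /forallP f_on; apply: W_bad => e eW.
  by apply/eqP; move/implyP: (f_on e); apply.
rewrite (sum_agrees_on_prod _ _ p_local) [X in _ * X]big1 ?mulr1 => [|v _];
  last exact: mass1.
rewrite (eq_bigr (p^~ (finfun out))) // => v _; congr (mu _ _ _); apply: val_inj => /=.
by apply: eq_map => e; rewrite ffunE.
Qed.

End Graphs.

Section ModeAlgorithm.
Variables (R : realFieldType) (Sin Sout : finType) (mu : rand_alg R Sin Sout).
Hypothesis mu_dist : is_rand_alg mu.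

Let mu_argmax d (s : d.-tuple Sin) :=
  exists_argmax (mu s) (card_gt0_of_sum_eq1 (mu_dist s).2).

Definition mode_alg : det_alg Sin Sout := fun d s => xchoose (mu_argmax s).

Lemma mode_alg_max d (s : d.-tuple Sin) t : mu s t <= mu s (mode_alg s).
Proof. by have /forallP := xchooseP (mu_argmax s). Qed.

Lemma mode_alg_prob_ge (L Delta d : nat) (s : d.-tuple Sin) :
  (#|Sout| <= L)%N -> (0 < d <= Delta)%N -> (L%:R ^+ Delta)^-1 <= mu s (mode_alg s).
Proof.
move=> card_le /andP [d_gt0 d_le].
have mass := argmax_mass_ge (@mode_alg_max d s) (mu_dist s).2.
rewrite card_tuple in mass.
have pow_gt0 : (0 < #|Sout| ^ d)%N.
  by rewrite lt0n; apply: contraTneq mass => ->; rewrite mul0r ler10.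
have L_gt0 : (0 < L)%N.
  by apply: leq_trans card_le; move: pow_gt0; rewrite expn_gt0 eqn0Ngt d_gt0 orbF.
have pow_le : (#|Sout| ^ d <= L ^ Delta)%N.
  by apply: leq_trans (leq_pexp2l L_gt0 d_le); rewrite leq_exp2r.
rewrite -natrX -[_^-1]mulr1 ler_pdivrMl ?ltr0n ?expn_gt0 ?L_gt0 //.
apply: le_trans mass _; apply: ler_wpM2r; first exact: (mu_dist s).1.
by rewrite ler_nat.
Qed.

End ModeAlgorithm.

Lemma det_counterexample (Sin Sout : finType) (Delta : nat) (Pi : problem_in Sin Sout)
    (Piin : bw_problem Sin) (A : det_alg Sin Sout) :
  ~ det_solves Delta Pi Piin A ->
  exists (G : pn_graph) (inp : Edge G -> Sin) (out : Edge G -> Sout),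
    [/\ well_formed G Delta, bw_valid Piin inp, det_output A inp out
      & ~~ valid_out Pi inp out].
Proof.
move=> A_fails; apply: NNPP => no_cex; apply: A_fails => G inp wf inp_ok out out_A.
by apply/negPn/negP => out_bad; apply: no_cex; exists G, inp, out.
Qed.

Local Close Scope ring_scope.

Theorem mainTheorem6 (Sin Sout : finType) (Pi : problem_in Sin Sout)
    (Piin : bw_problem Sin) (Delta L : nat) :
  #|Sout| <= L ->
  (forall A : det_alg Sin Sout, ~ det_solves Delta Pi Piin A) ->
  forall (R : realFieldType) (mu : rand_alg R Sin Sout), is_rand_alg mu ->
  exists (G : pn_graph) (inp : Edge G -> Sin),
    [/\ well_formed G Delta, bw_valid Piin inp &
        (1 / (L%:R ^+ (Delta ^ 2)) <= fail_prob Pi mu inp)%R].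
Proof.
move=> card_le no_det R mu mu_dist.
have [G [inp [out [wf inp_ok out_mode out_bad]]]] :=
  det_counterexample (no_det (mode_alg mu_dist)).
exists G, inp; split => //.
have [W W_le W_bad] := invalid_out_local wf out_bad.
apply: le_trans (fail_prob_ge_cylinder wf mu_dist (fun out' => W_bad out')).
set c : R := ((L%:R ^+ Delta)^-1)%R.
have c_ge0 : (0 <= c)%R by rewrite invr_ge0 exprn_ge0.
have c_le1 : (c <= 1)%R by rewrite /c -natrX inv_natr_le1.
rewrite div1r -mulnn exprM -exprVn -/c.
apply: le_trans (ler_wiXn2l c_ge0 c_le1 W_le) _.
rewrite -prodr_const; apply: ler_prod => v _; rewrite c_ge0 out_mode /=.
have [_ [_ [wdeg_ok _]]] := wf.
by apply: mode_alg_prob_ge card_le _; rewrite (size_ports wf) wdeg_ok.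
Qed.
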